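(* Let $\beta\in(0,1)$, $V_{\mathrm{th}}\in\mathbb{R}$, and let $c_1,\dots,c_T\in\mathbb{R}$ be an arbitrary input sequence. Let $\mathcal{H}(x)=1$ if $x\ge 0$ and $\mathcal{H}(x)=0$ otherwise. (Sequential LIF with soft reset.) Define $u_0=0$, $s_0=0$ and, for $t=1,\dots,T$, $$u_t=\beta\,(u_{t-1}-V_{\mathrm{th}}s_{t-1})+c_t,\qquad s_t=\mathcal{H}(u_t-V_{\mathrm{th}}).$$ (Decoupled reset.) Define, for $t=1,\dots,T$, $u'_t=\sum_{k=1}^{t}\beta^{t-k}c_k$ (equivalently $u'_0=0$, $u'_t=\beta u'_{t-1}+c_t$), and define $A_1=0$, $d_1=V_{\mathrm{th}}$ and, for $t=2,\dots,T$, $$A_t=\begin{cases}\beta\,(1+A_{t-1}), & \text{if } u'_{t-1}\ge d_{t-1},\\ \beta\,A_{t-1}, & \text{if } u'_{t-1}< d_{t-1},\end{cases}\qquad d_t=V_{\mathrm{th}}\,(A_t+1).$$ Then for every $t=1,\dots,T$, $s_t=\mathcal{H}(u'_t-d_t)$; that is, the spike train obtained from the decoupled-reset computation (in which $u'_1,\dots,u'_T$ do not depend on any spikes and $d_1,\dots,d_T$ are obtained from $u'_1,\dots,u'_T$ alone) coincides with that of the sequential LIF neuron with soft reset.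
   Context: The sequence $(u'_1,\dots,u'_T)$ is the discrete convolution of $(c_1,\dots,c_T)$ with the kernel $(\beta^0,\beta^1,\dots,\beta^{T-1})$, so it can be computed in parallel (e.g. via FFT), while $(d_t)$ is obtained by a single linear-time scan over $(u'_t)$. *)

From Stdlib Require Import Reals.
Open Scope R_scope.

Definition heaviside (x : R) : R := if Rle_dec 0 x then 1 else 0.

Fixpoint lif (beta Vth : R) (c : nat -> R) (t : nat) : R * R :=
  match t with
  | O => (0, 0)
  | S t' =>
      let (u, s) := lif beta Vth c t' in
      let u' := beta * (u - Vth * s) + c t in
      (u', heaviside (u' - Vth))
  end.

Definition lif_u beta Vth c t := fst (lif beta Vth c t).
Definition lif_s beta Vth c t := snd (lif beta Vth c t).

Definition u_dec (beta : R) (c : nat -> R) (t : nat) : R :=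
  sum_f 1 t (fun k => beta ^ (t - k) * c k).

(* Correct convention: sum_f 1 0 _ is not the empty sum, so guard t = 0. *)
Definition u_dec0 (beta : R) (c : nat -> R) (t : nat) : R :=
  match t with O => 0 | _ => u_dec beta c t end.

(* A_t for t >= 1 (A_1 = 0); index shifted: A_aux n = A_{n+1}. *)
Fixpoint A_aux (beta Vth : R) (c : nat -> R) (n : nat) : R :=
  match n with
  | O => 0
  | S n' =>
      let Aprev := A_aux beta Vth c n' in
      let dprev := Vth * (Aprev + 1) in
      if Rle_dec dprev (u_dec0 beta c (S n'))
      then beta * (1 + Aprev)
      else beta * Aprev
  end.

Definition A_dec beta Vth c (t : nat) : R := A_aux beta Vth c (t - 1).
Definition d_dec beta Vth c (t : nat) : R := Vth * (A_dec beta Vth c t + 1).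

(** The soft-reset potential is the reset-free potential minus [Vth] times the
    discounted spike count [A_t = sum_(k < t) beta^(t-k) s_k]; this count obeys
    [A_(t+1) = beta (A_t + s_t)], so [u_t - Vth = u'_t - d_t] for every [t] and
    the two neurons fire at the same steps. *)

From Stdlib Require Import Reals Lra Lia.
Open Scope R_scope.

Lemma heaviside_sub (x y : R) :
  heaviside (x - y) = if Rle_dec y x then 1 else 0.
Proof. unfold heaviside; destruct (Rle_dec 0 (x - y)), (Rle_dec y x); lra. Qed.

Lemma u_dec_1 (beta : R) (c : nat -> R) : u_dec beta c 1 = c 1%nat.
Proof. unfold u_dec, sum_f; simpl; ring. Qed.

Lemma u_dec_S (beta : R) (c : nat -> R) (n : nat) :
  u_dec beta c (S (S n)) = beta * u_dec beta c (S n) + c (S (S n)).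
Proof.
  unfold u_dec, sum_f.
  replace (S (S n) - 1)%nat with (S n) by lia.
  replace (S n - 1)%nat with n by lia.
  rewrite tech5, scal_sum.
  f_equal.
  - apply sum_eq; intros i Hi.
    replace (S (S n) - (i + 1))%nat with (S (S n - (i + 1))) by lia.
    simpl; ring.
  - replace (S (S n) - (S n + 1))%nat with 0%nat by lia.
    replace (S n + 1)%nat with (S (S n)) by lia.
    simpl; ring.
Qed.

Lemma A_aux_S (beta Vth : R) (c : nat -> R) (n : nat) :
  A_aux beta Vth c (S n) =
  beta * (A_aux beta Vth c n
          + heaviside (u_dec beta c (S n) - Vth * (A_aux beta Vth c n + 1))).
Proof. rewrite heaviside_sub; simpl; destruct Rle_dec; ring. Qed.

Lemma lif_u_S (beta Vth : R) (c : nat -> R) (t : nat) :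
  lif_u beta Vth c (S t) =
  beta * (lif_u beta Vth c t - Vth * lif_s beta Vth c t) + c (S t).
Proof. unfold lif_u, lif_s; simpl; destruct (lif beta Vth c t); reflexivity. Qed.

Lemma lif_s_S (beta Vth : R) (c : nat -> R) (t : nat) :
  lif_s beta Vth c (S t) = heaviside (lif_u beta Vth c (S t) - Vth).
Proof. unfold lif_u, lif_s; simpl; destruct (lif beta Vth c t); reflexivity. Qed.

Lemma lif_u_decoupled (beta Vth : R) (c : nat -> R) (n : nat) :
  lif_u beta Vth c (S n) = u_dec beta c (S n) - Vth * A_aux beta Vth c n.
Proof.
  induction n as [|n IH].
  - rewrite lif_u_S, u_dec_1; unfold lif_u, lif_s; simpl; ring.
  - rewrite lif_u_S, lif_s_S, IH, u_dec_S, A_aux_S.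
    replace (u_dec beta c (S n) - Vth * A_aux beta Vth c n - Vth)
      with (u_dec beta c (S n) - Vth * (A_aux beta Vth c n + 1)) by ring.
    ring.
Qed.

Lemma lif_s_decoupled (beta Vth : R) (c : nat -> R) (n : nat) :
  lif_s beta Vth c (S n) =
  heaviside (u_dec beta c (S n) - Vth * (A_aux beta Vth c n + 1)).
Proof. rewrite lif_s_S, lif_u_decoupled; f_equal; ring. Qed.

Theorem mainTheorem1 (beta Vth : R) (c : nat -> R) (T : nat) :
  0 < beta < 1 ->
  forall t : nat, (1 <= t <= T)%nat ->
    lif_s beta Vth c t = heaviside (u_dec beta c t - d_dec beta Vth c t).
Proof.
  (* The identity holds for every [beta]. *)
  intros _ [|n] Ht; [lia|].
  rewrite lif_s_decoupled; unfold d_dec, A_dec.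
  now rewrite Nat.sub_succ, Nat.sub_0_r.
Qed.
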